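(* Let $G=(V,E)$ be an unweighted $n$-vertex graph with girth $g$. Consider a non-contractive embedding of $G$ into a tree $T$. If an edge $e\in E$ is chosen uniformly at random, then $\Pr[d_T(e)\ge g/3-1]\ge(|E|-(n-1))/|E|$.
   Context: $G$ induces the shortest-path metric $d_G$ with unit edge lengths. An embedding into a tree $T$ maps $V$ into the vertices of an edge-weighted tree with shortest-path metric $d_T$; non-contractive means $d_T(x,y)\ge d_G(x,y)$ for all $x,y$, in particular $d_T(e)\ge1$ for each edge. For $e=(x,y)$, $d_T(e)$ denotes the $T$-distance between the images of $x$ and $y$. *)

From HB Require Import structures.
From mathcomp Require Import all_boot all_order all_algebra.
Set Implicit Arguments. Unset Strict Implicit. Unset Printing Implicit Defensive.
Import Order.TTheory GRing.Theory Num.Theory.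
Local Open Scope ring_scope.

Definition simple_graph (T : finType) (e : rel T) : Prop :=
  symmetric e /\ irreflexive e.

Definition edges (T : finType) (e : rel T) : {set {set T}} :=
  [set [set u.1; u.2] | u in [set u : T * T | e u.1 u.2]].

Definition walk (T : finType) (e : rel T) (x y : T) (k : nat) : Prop :=
  exists s : seq T, size s = k /\ path e x s /\ last x s = y.

Definition is_gdist (T : finType) (e : rel T) (x y : T) (d : nat) : Prop :=
  walk e x y d /\ forall j, walk e x y j -> (d <= j)%N.

Definition is_cycle (T : finType) (e : rel T) (c : seq T) : Prop :=
  (3 <= size c)%N /\ uniq c /\ cycle e c.

Definition girth (T : finType) (e : rel T) (g : nat) : Prop :=
  (exists c, is_cycle e c /\ size c = g) /\
  forall c, is_cycle e c -> (g <= size c)%N.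

Fixpoint pweight (R : numDomainType) (U : Type) (w : U -> U -> R) (x : U) (s : seq U) : R :=
  if s is y :: s' then w x y + pweight w y s' else 0.

Definition weighted_tree (R : numDomainType) (U : finType) (eT : rel U) (w : U -> U -> R) : Prop :=
  simple_graph eT /\ (forall a b, connect eT a b) /\ (forall c, ~ is_cycle eT c) /\
  (forall a b, eT a b -> 0 < w a b) /\ (forall a b, w a b = w b a).

Definition is_tdist (R : numDomainType) (U : finType) (eT : rel U) (w : U -> U -> R)
  (a b : U) (r : R) : Prop :=
  (exists s, path eT a s /\ last a s = b /\ pweight w a s = r) /\
  (forall s, path eT a s -> last a s = b -> r <= pweight w a s).

From HB Require Import structures.
From mathcomp Require Import all_boot all_order all_algebra.
From mathcomp Require Import lra.
Import Order.TTheory GRing.Theory Num.Theory.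
Local Open Scope ring_scope.
Set Implicit Arguments. Unset Strict Implicit. Unset Printing Implicit Defensive.

(* Call a pair u, v short if d_T(f u, f v) < g/3 - 1, and fix for every pair a walk of G from
   u to v of length at most d_T(f u, f v).  Closing up at most three such walks between short
   pairs gives a closed walk of length < g, which by the girth bound traverses every edge an
   even number of times.  Hence for every short edge A the parity of the traversals of A by
   the chosen walks is a Z/2-cocycle on the graph of short pairs.  The tree metric is half the
   sum of the cut metrics of the tree edges, and the cuts seen from a root are laminar; this
   gives the four-point condition, so the short neighbours of a vertex farthest from the root
   are pairwise short.  Eliminating vertices in that order shows that each cocycle is a
   coboundary h_A, and on a short edge B the function h_A separates the ends of B iff A = B.
   The h_A are therefore independent modulo constants: there are at most n - 1 short edges. *)

Lemma set2_eq_cases (T : finType) (u v a b : T) :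
  [set u; v] = [set a; b] -> u != v -> (u = a /\ v = b) \/ (u = b /\ v = a).
Proof.
move=> E nuv.
have /set2P Hu : u \in [set a; b] by rewrite -E set21.
have /set2P Hv : v \in [set a; b] by rewrite -E set22.
by case: Hu Hv nuv => -> [] ->; rewrite ?eqxx // => _; tauto.
Qed.

Section EdgeParity.
Variables (T : finType) (r : rel T).
Hypotheses (r_sym : symmetric r) (r_irr : irreflexive r).

Definition del_edge (a b : T) (W : pred T) : rel T :=
  [rel u v | [&& r u v, [set u; v] != [set a; b], W u & W v]].

Lemma del_edge_sym a b W : symmetric (del_edge a b W).
Proof. by move=> u v; rewrite /del_edge /= r_sym setUC (andbC (W u)). Qed.

Lemma del_edge_path_mem a b W x p :
  path (del_edge a b W) x p -> p != [::] -> {subset x :: p <= W}.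
Proof.
elim: p x => [|y p IH] x //= /andP[/and4P[_ _ Wx Wy] Hp] _ z.
rewrite inE => /predU1P[-> //|].
case: p IH Hp => [|y' p] IH Hp; first by rewrite inE => /eqP->.
exact: IH.
Qed.

Lemma del_edge_cycle a b W : r a b -> connect (del_edge a b W) a b ->
  exists c, is_cycle r c /\ {subset c <= W}.
Proof.
move=> rab /connectP[p0 Hp0 Eb].
case: (shortenP Hp0) Eb => p Hp Hu _ {p0 Hp0} Eb; subst b.
have np : p != [::] by apply: contraTneq rab => ->; rewrite /= r_irr.
exists (a :: p); split; last exact: del_edge_path_mem Hp np.
split; last split=> //.
  case: p Hp np {Hu rab} => [|y [|y' p]] //= /andP[+ _] _.
  by rewrite /del_edge /= eqxx andbF.
rewrite /= rcons_path r_sym rab andbT.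
by apply: sub_path Hp; move=> u v /andP[].
Qed.

Fixpoint edge_parity (A : {set T}) (x : T) (s : seq T) : bool :=
  if s is y :: s' then ([set x; y] == A) (+) edge_parity A y s' else false.

Lemma edge_parity_cat A x s1 s2 :
  edge_parity A x (s1 ++ s2) = edge_parity A x s1 (+) edge_parity A (last x s1) s2.
Proof. by elim: s1 x => [|y s1 IH] x //=; rewrite IH addbA. Qed.

Lemma edge_parity_notin a b x s :
  (a \notin x :: s) || (b \notin x :: s) -> edge_parity [set a; b] x s = false.
Proof.
elim: s x => [|y s IH] x //= nab.
rewrite IH ?addbF; last first.
  by move: nab; rewrite !inE !negb_or => /orP[]/andP[_ ->]; rewrite ?orbT.
apply/negbTE/eqP => E.
have /set2P Ha : a \in [set x; y] by rewrite E set21.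
have /set2P Hb : b \in [set x; y] by rewrite E set22.
by move: nab; case: Ha Hb => <- [] <-; rewrite !inE !eqxx ?orbT.
Qed.

Section Sides.
Variables (a b : T) (W : pred T).
Local Notation side := (connect (del_edge a b W) a).
Hypothesis ab_bridge : ~~ side b.

Lemma bridge_side_crossing u y : r u y -> W u -> W y ->
  ([set u; y] == [set a; b]) = side u (+) side y.
Proof.
move=> ruy Wu Wy; have [E|NE] := eqVneq.
  have nuy : u != y by apply: contraTneq ruy => ->; rewrite r_irr.
  by case: (set2_eq_cases E nuy) => -[-> ->]; rewrite connect0 (negbTE ab_bridge).
have Duy : del_edge a b W u y by rewrite /del_edge /= ruy NE Wu Wy.
have Dyu : del_edge a b W y u by rewrite del_edge_sym.
have -> : side y = side u.
  by apply/idP/idP => S; apply: connect_trans S (connect1 _).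
by rewrite addbb.
Qed.

Lemma edge_parity_side u t : path r u t -> W u -> all W t ->
  edge_parity [set a; b] u t = side u (+) side (last u t).
Proof.
elim: t u => [|y t IH] u /=; first by rewrite addbb.
move=> /andP[ruy Hp] Wu /andP[Wy Wt].
by rewrite IH // bridge_side_crossing // addbA -(addbA (side u)) addbb addbF.
Qed.

End Sides.

Lemma edge_parity_short_closed_walk (g : nat) a b x s :
  (forall c, is_cycle r c -> (g <= size c)%N) -> r a b ->
  path r x s -> last x s = x -> (size s < g)%N -> edge_parity [set a; b] x s = false.
Proof.
move=> girth_g rab Hp Hl Hs.
have [-> //|ns] := eqVneq s [::].
have xs : x \in s.
  by case: s ns Hl {Hp Hs} => // y s' _ <-; rewrite /= mem_last.
have [C|nC] := boolP (connect (del_edge a b (mem s)) a b).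
  have [c [cyc_c cs]] := del_edge_cycle rab C.
  have le_gs : (g <= size s)%N.
    by apply: leq_trans (girth_g c cyc_c) (uniq_leq_size _ cs); case: cyc_c => _ [].
  by rewrite ltnNge le_gs in Hs.
by rewrite (edge_parity_side nC) // ?Hl ?addbb //; apply/allP.
Qed.

End EdgeParity.

Section TreeMetric.
Variables (R : realFieldType) (U : finType) (eT : rel U) (w dT : U -> U -> R).
Hypothesis eT_tree : weighted_tree eT w.
Hypothesis dT_tdist : forall a b, is_tdist eT w a b (dT a b).

Let eT_sym : symmetric eT. Proof. by case: eT_tree => [[]]. Qed.
Let eT_irr : irreflexive eT. Proof. by case: eT_tree => [[]]. Qed.
Let eT_connected : forall a b, connect eT a b. Proof. by case: eT_tree => _ []. Qed.
Let eT_acyclic : forall c, ~ is_cycle eT c. Proof. by case: eT_tree => _ [_ []]. Qed.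
Let w_gt0 : forall a b, eT a b -> 0 < w a b. Proof. by case: eT_tree => _ [_ [_ []]]. Qed.
Let w_sym : forall a b, w a b = w b a. Proof. by case: eT_tree => _ [_ [_ []]]. Qed.

Definition side (i : U * U) : pred U := connect (del_edge eT i.1 i.2 predT) i.1.

Lemma tree_edge_bridge i : eT i.1 i.2 -> ~~ side i i.2.
Proof.
move=> Ei; apply/negP => C.
by have [c [cyc_c _]] := del_edge_cycle eT_sym eT_irr Ei C; apply: eT_acyclic cyc_c.
Qed.

Lemma side_crossing i u y : eT i.1 i.2 -> eT u y ->
  ([set u; y] == [set i.1; i.2]) = side i u (+) side i y.
Proof. by move=> Ei Euy; rewrite (bridge_side_crossing eT_sym eT_irr (tree_edge_bridge Ei)). Qed.

Lemma side_path_const i u t : eT i.1 i.2 -> path eT u t ->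
  (i.1 \notin u :: t) || (i.2 \notin u :: t) -> side i (last u t) = side i u.
Proof.
move=> Ei Hp /edge_parity_notin.
rewrite (edge_parity_side eT_sym eT_irr (tree_edge_bridge Ei)) //; last exact: all_predT.
by move/negbT; rewrite negb_add eq_sym => /eqP E; exact: E.
Qed.

Lemma side_path_ends i u t : eT i.1 i.2 -> path eT u t ->
  side i (last u t) != side i u -> (i.1 \in u :: t) && (i.2 \in u :: t).
Proof.
move=> Ei Hp; apply: contraR; rewrite negb_and => nab.
by rewrite (side_path_const Ei Hp nab).
Qed.

Lemma side_simple_path_const i u t : eT i.1 i.2 -> path eT u t -> uniq (u :: t) ->
  side i (last u t) = side i u -> {in u :: t, forall v, side i v = side i u}.
Proof.
move=> Ei; elim: t u => [|y t IH] u /=; first by move=> _ _ _ v /[1!inE] /eqP->.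
move=> /andP[Euy Hp] /andP[u_notin Ut] Hl v.
have [Syu|Nyu] := eqVneq (side i y) (side i u).
  rewrite in_cons => /predU1P[-> //|vyt].
  by rewrite -Syu (IH y Hp Ut) // Syu.
have /eqP E : [set u; y] == [set i.1; i.2].
  by rewrite side_crossing //; case: (side i u) (side i y) Nyu => [] [].
have : (i.1 \notin y :: t) || (i.2 \notin y :: t).
  have /set2P : u \in [set i.1; i.2] by rewrite -E set21.
  by case=> <-; rewrite u_notin ?orbT.
by move/(side_path_const Ei Hp); rewrite Hl => Nuy; rewrite Nuy eqxx in Nyu.
Qed.

(* Every tree edge is counted in both orientations, whence the factor 2 in [tdist_cut]. *)
Definition cut_dist (a b : U) : R :=
  \sum_(i : U * U | eT i.1 i.2) w i.1 i.2 * (side i a (+) side i b)%:R.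

Lemma cut_dist_refl a : cut_dist a a = 0.
Proof. by rewrite /cut_dist big1 // => i _; rewrite addbb mulr0. Qed.

Lemma cut_dist_sym a b : cut_dist a b = cut_dist b a.
Proof. by apply: eq_bigr => i _; rewrite addbC. Qed.

Lemma cut_dist_edge a u : eT a u -> cut_dist a u = w a u *+ 2.
Proof.
move=> Eau; have nau : a != u by apply: contraTneq Eau => ->; rewrite eT_irr.
rewrite /cut_dist (eq_bigr (fun i => w i.1 i.2 * ([set a; u] == [set i.1; i.2])%:R));
  last by move=> i Ei; rewrite side_crossing.
rewrite (bigD1 (a, u)) //= (bigD1 (u, a)) /=; last first.
  by rewrite eT_sym Eau; apply: contra nau => /eqP[-> _].
rewrite big1 ?addr0; first by rewrite [[set u; a]]setUC eqxx /= !mulr1 w_sym mulr2n.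
move=> [p q] /= /andP[/andP[_ Nau] Nua]; case: eqP => [E|_]; last by rewrite mulr0.
by move: Nau Nua; case: (set2_eq_cases E nau) => -[<- <-]; rewrite eqxx.
Qed.

Lemma cut_dist_triangle a u b : cut_dist a b <= cut_dist a u + cut_dist u b.
Proof.
rewrite /cut_dist -big_split /=; apply: ler_sum => i Ei.
rewrite -mulrDr ler_wpM2l ?(ltW (w_gt0 Ei)) // -natrD ler_nat.
by case: (side i a); case: (side i u); case: (side i b).
Qed.

Lemma cut_dist_path_le a s : path eT a s -> cut_dist a (last a s) <= pweight w a s *+ 2.
Proof.
elim: s a => [|u s IH] a /=; first by rewrite cut_dist_refl mul0rn.
move=> /andP[Eau Hp]; apply: le_trans (cut_dist_triangle a u _) _.
by rewrite cut_dist_edge // mulrnDl lerD2l IH.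
Qed.

Lemma cut_dist_simple_path a s : path eT a s -> uniq (a :: s) ->
  cut_dist a (last a s) = pweight w a s *+ 2.
Proof.
elim: s a => [|u s IH] a /=; first by rewrite cut_dist_refl mul0rn.
move=> /andP[Eau Hp] /andP[a_notin Us].
rewrite mulrnDl -cut_dist_edge // -IH // /cut_dist -big_split /=.
apply: eq_bigr => i Ei; rewrite -mulrDr -natrD.
have [Sau|Nau] := eqVneq (side i a) (side i u); first by rewrite Sau addbb.
have /eqP E : [set a; u] == [set i.1; i.2].
  by rewrite side_crossing //; case: (side i a) (side i u) Nau => [] [].
have : (i.1 \notin u :: s) || (i.2 \notin u :: s).
  have /set2P : a \in [set i.1; i.2] by rewrite -E set21.
  by case=> <-; rewrite a_notin ?orbT.
move/(side_path_const Ei Hp) => ->.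
by case: (side i a) (side i u) Nau => [] [].
Qed.

Lemma simple_path_exists a b : exists s, [/\ path eT a s, uniq (a :: s) & last a s = b].
Proof.
have /connectP[p Hp ->] := eT_connected a b.
by case: (shortenP Hp) => p' Hp' Hu _; exists p'.
Qed.

Lemma tdist_cut a b : dT a b *+ 2 = cut_dist a b.
Proof.
have [[s [Hs [Hl <-]]] dT_min] := dT_tdist a b.
apply/le_anti/andP; split; last by rewrite -Hl cut_dist_path_le.
have [s' [Hp Hu Hl']] := simple_path_exists a b.
by rewrite -Hl' cut_dist_simple_path // lerMn2r dT_min ?orbT.
Qed.

Lemma tdist_sym a b : dT a b = dT b a.
Proof. by apply/eqP; rewrite -(eqr_pMn2r (isT : (0 < 2)%N)) !tdist_cut cut_dist_sym. Qed.

Section Rooted.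
Variable r0 : U.

Definition below (i : U * U) (v : U) := side i v != side i r0.

Lemma below_root i : below i r0 = false.
Proof. by rewrite /below eqxx. Qed.

Lemma below_eq i u v : (below i u == below i v) = (side i u == side i v).
Proof. by rewrite /below; case: (side i u); case: (side i v); case: (side i r0). Qed.

Lemma below_path_ends i u t : eT i.1 i.2 -> path eT u t ->
  below i (last u t) != below i u -> (i.1 \in u :: t) && (i.2 \in u :: t).
Proof. by rewrite below_eq; apply: side_path_ends. Qed.

Lemma below_simple_path_const i u t : eT i.1 i.2 -> path eT u t -> uniq (u :: t) ->
  below i (last u t) = below i u -> {in u :: t, forall v, below i v = below i u}.
Proof.
rewrite /below => Ei Hp Hu Hl v vt; rewrite (side_simple_path_const Ei Hp Hu _ vt) //.
by move: Hl; case: (side i (last u t)); case: (side i u); case: (side i r0).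
Qed.

Lemma below_laminar i j x y z : eT i.1 i.2 -> eT j.1 j.2 ->
  below i x -> below j x -> below i y -> ~~ below j y -> below j z -> ~~ below i z -> False.
Proof.
move=> Ei Ej ix jx iy njy jz niz.
have [s1 [P1 U1 L1]] := simple_path_exists x y.
have /andP[j1 _] : (j.1 \in x :: s1) && (j.2 \in x :: s1).
  by apply: (below_path_ends Ej P1); rewrite L1 jx (negbTE njy).
have i_j1 : below i j.1 by rewrite (below_simple_path_const Ei P1 U1) // L1 ix iy.
have [s2 [P2 U2 L2]] := simple_path_exists x z.
have /andP[i1 i2] : (i.1 \in x :: s2) && (i.2 \in x :: s2).
  by apply: (below_path_ends Ei P2); rewrite L2 ix (negbTE niz).
have j_s2 : {in x :: s2, forall v, below j v}.
  by move=> v /(below_simple_path_const Ej P2 U2) ->; rewrite // L2 jx jz.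
have [p [ip jp]] : exists p, ~~ below i p /\ below j p.
  have Nb : below i i.1 != below i i.2.
    by rewrite below_eq (negbTE (tree_edge_bridge Ei)) /side connect0.
  have [b1|nb1] := boolP (below i i.1); last by exists i.1; split; rewrite ?j_s2.
  by exists i.2; split; [move: Nb; rewrite b1; case: (below i i.2) | exact: j_s2].
have [s3 [P3 U3 L3]] := simple_path_exists p r0.
have /andP[j1' _] : (j.1 \in p :: s3) && (j.2 \in p :: s3).
  by apply: (below_path_ends Ej P3); rewrite L3 below_root jp.
have := below_simple_path_const Ei P3 U3 _ j1'.
by rewrite i_j1 L3 below_root (negbTE ip) => /(_ erefl).
Qed.

Lemma cut_dist_below_le a b c :
  (forall i, eT i.1 i.2 -> below i a -> below i b -> below i c) ->
  cut_dist b c + cut_dist r0 a <= cut_dist a b + cut_dist r0 c.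
Proof.
move=> abc; rewrite /cut_dist -!big_split /=; apply: ler_sum => i Ei.
rewrite -!mulrDr ler_wpM2l ?(ltW (w_gt0 Ei)) // -!natrD ler_nat.
have : below i a ==> below i b ==> below i c by apply/implyP => /(abc i Ei)/implyP.
rewrite /below.
by case: (side i a); case: (side i b); case: (side i c); case: (side i r0).
Qed.

End Rooted.

Lemma tdist_four_point r x y z :
  dT y z + dT r x <= Num.max (dT x y + dT r z) (dT x z + dT r y).
Proof.
have tdist_cut_le a b c d a' b' c' d' :
    cut_dist a b + cut_dist c d <= cut_dist a' b' + cut_dist c' d' ->
    dT a b + dT c d <= dT a' b' + dT c' d'.
  by move=> le_cut; rewrite -(ler_pMn2r (isT : (0 < 2)%N)) !mulrnDl !tdist_cut.
rewrite le_max; apply/orP.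
pose nested := [forall i : U * U, [&& eT i.1 i.2, below r i x & below r i y] ==> below r i z].
have [xyz|] := boolP nested.
  left; apply/tdist_cut_le/cut_dist_below_le => i Ei ix iy.
  by move/forallP/(_ i): xyz; rewrite Ei ix iy.
rewrite negb_forall => /existsP[i]; rewrite negb_imply => /andP[/and3P[Ei ix iy] niz].
right; rewrite tdist_sym; apply/tdist_cut_le/cut_dist_below_le => j Ej jx jz.
by apply: contraT => njy; case: (below_laminar Ei Ej ix jx iy njy jz niz).
Qed.

Lemma tdist_far_from_root r x y z : dT r y <= dT r x -> dT r z <= dT r x ->
  dT y z <= Num.max (dT x y) (dT x z).
Proof.
move=> ry rz; have := tdist_four_point r x y z.
by rewrite !le_max => /orP[] le; apply/orP; [left | right]; lra.
Qed.

End TreeMetric.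

Section Coboundary.
Variables (V : finType) (disp : Order.disp_t) (O : orderType disp).
Variables (Q : rel V) (k : V -> O) (c : V -> V -> bool).
Hypothesis Q_sym : symmetric Q.
Hypothesis Q_simplicial :
  forall x y z, (k y <= k x)%O -> (k z <= k x)%O -> Q x y -> Q x z -> Q y z.
Hypothesis c_sym : forall x y, Q x y -> c y x = c x y.
Hypothesis c_cocycle :
  forall x y z, Q x y -> Q y z -> Q x z -> c x z = c x y (+) c y z.

(* Induction on [A]: the [Q]-neighbours of a [k]-maximal [x] are pairwise adjacent, so
   [h x] may be read off from any one of them. *)
Lemma cocycle_coboundary_on (A : {set V}) :
  exists h : V -> bool, {in A &, forall u v, Q u v -> c u v = h u (+) h v}.
Proof.
elim: {A}_.+1 {-2}A (ltnSn #|A|) => // m IH A leAm.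
have [-> | [x0 x0A]] := set_0Vmem A; first by exists xpred0 => u v; rewrite inE.
have [x xA x_max] := @arg_maxP _ _ _ x0 (mem A) k x0A.
have [h Hh] : exists h : V -> bool, {in A :\ x &, forall u v, Q u v -> c u v = h u (+) h v}.
  by apply: IH; rewrite (cardsD1 x A) (xA : x \in A) in leAm.
pose hx := if [pick y in A :\ x | Q x y] is Some y then h y (+) c x y else false.
pose h' v := if v == x then hx else h v.
have h'_off v : v \in A :\ x -> h' v = h v by rewrite /h' => /setD1P[/negbTE ->].
have c_x v : v \in A :\ x -> Q x v -> c x v = h' x (+) h' v.
  move=> vAx Qxv; rewrite (h'_off v) // /h' eqxx /hx.
  case: pickP => [y /andP[yAx Qxy] | /(_ v)]; last by rewrite vAx Qxv.
  have Qyv : Q y v.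
    by apply: Q_simplicial Qxy Qxv; apply: x_max; [case/setD1P: yAx | case/setD1P: vAx].
  by rewrite (c_cocycle Qxy Qyv Qxv) (Hh y v) // addbA (addbC (c x y)).
exists h' => u v uA vA.
have [-> | nux] := eqVneq u x; have [-> | nvx] := eqVneq v x => Quv.
- by have := c_cocycle Quv Quv Quv; rewrite !addbb; case: (c x x).
- by apply: c_x; rewrite // !inE nvx.
- have Qxu : Q x u by rewrite Q_sym.
  by rewrite -c_sym // addbC; apply: c_x; rewrite // !inE nux.
- by rewrite !h'_off ?Hh // !inE ?nux ?nvx.
Qed.

Lemma cocycle_coboundary : exists h : V -> bool, forall u v, Q u v -> c u v = h u (+) h v.
Proof.
have [h Hh] := cocycle_coboundary_on [set: V].
by exists h => u v; apply: Hh; rewrite inE.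
Qed.

End Coboundary.

(* The map (S, b) |-> sum_(A in S) (h A - h A v0) + b is injective on the subsets S of [H],
   since the parity of [A \in S] is read off at the ends of a cut of [A]. *)
Lemma card_lt_of_cut_family (I V : finType) (H : {set I}) (h : I -> V -> bool) (v0 : V) :
  (forall B, B \in H -> exists u v, {in H, forall A, h A u (+) h A v = (A == B)}) ->
  (#|H| < #|V|)%N.
Proof.
move=> cut_B.
pose F (p : {set I} * bool) : {ffun V -> bool} :=
  [ffun v => \big[addb/false]_(A in p.1) (h A v (+) h A v0) (+) p.2].
have F_v0 p : F p v0 = p.2 by rewrite ffunE big1 // => A _; rewrite addbb.
have F_cut (S : {set I}) b B u v :
    S \subset H -> {in H, forall A, h A u (+) h A v = (A == B)} ->
    F (S, b) u (+) F (S, b) v = (B \in S).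
  move=> SH uvB.
  have cancel_b X Y c : (X (+) c) (+) (Y (+) c) = X (+) Y by case: X Y c => [] [] [].
  rewrite !ffunE /= cancel_b -big_split /=.
  rewrite (eq_bigr (fun A => A == B)) => [|A AS]; last by rewrite cancel_b uvB ?(subsetP SH).
  have [BS|nBS] := boolP (B \in S).
    by rewrite (bigD1 B BS) eqxx big1 // => A /andP[_ /negbTE].
  by rewrite big1 // => A AS; apply: contraNF nBS => /eqP <-.
have F_inj : {in setX (powerset H) [set: bool] &, injective F}.
  move=> [S b] [S' b'] /setXP[/= SH _] /setXP[/= S'H _] FSS'.
  rewrite !powersetE in SH S'H.
  congr pair; last by have := F_v0 (S, b); rewrite FSS' F_v0.
  apply/setP => B; have [BH|nBH] := boolP (B \in H); last first.
    by rewrite (contraNF (subsetP SH B) nBH) (contraNF (subsetP S'H B) nBH).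
  have [u [v uvB]] := cut_B B BH.
  by rewrite -(F_cut S b B u v) // -(F_cut S' b' B u v) // FSS'.
have := max_card (F @: setX (powerset H) [set: bool]).
rewrite (card_in_imset F_inj) cardsX card_powerset cardsT card_bool card_ffun card_bool.
by rewrite -(@ltn_exp2l 2) // => /(leq_trans _); apply; rewrite ltn_Pmulr ?expn_gt0.
Qed.

Lemma walks_within_bound (R : numDomainType) (V : finType) (e : rel V) (D : V -> V -> R) :
  (forall u v, exists d, is_gdist e u v d /\ d%:R <= D u v) ->
  exists walk_of : V -> V -> seq V, forall u v,
    [/\ path e u (walk_of u v), last u (walk_of u v) = v & (size (walk_of u v))%:R <= D u v].
Proof.
move=> dist_le.
have walk u v : exists s, [/\ path e u s, last u s = v & (size s)%:R <= D u v].
  by have [d [[[s [<- [Hp Hl]]] _] le_d]] := dist_le u v; exists s.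
have [walk_of walk_ofP] := fin_all_exists (fun u => fin_all_exists (walk u)).
by exists walk_of.
Qed.

Section ShortEdges.
Variables (R : realFieldType) (V : finType) (e : rel V) (g : nat).
Variables (D : V -> V -> R) (walk_of : V -> V -> seq V).
Hypotheses (e_sym : symmetric e) (e_irr : irreflexive e).
Hypothesis girth_le : forall c, is_cycle e c -> (g <= size c)%N.
Hypothesis D_sym : forall u v, D u v = D v u.
Hypothesis walk_ofP : forall u v,
  [/\ path e u (walk_of u v), last u (walk_of u v) = v & (size (walk_of u v))%:R <= D u v].

Let walk_of_path u v : path e u (walk_of u v). Proof. by case: (walk_ofP u v). Qed.
Let walk_of_last u v : last u (walk_of u v) = v. Proof. by case: (walk_ofP u v). Qed.
Let walk_of_size u v : (size (walk_of u v))%:R <= D u v. Proof. by case: (walk_ofP u v). Qed.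

Definition short u v := D u v < g%:R / 3 - 1.

Definition walk_parity A u v := edge_parity A u (walk_of u v).

Lemma short_sym : symmetric short.
Proof. by move=> u v; rewrite /short D_sym. Qed.

Lemma closed_walk_parity a b x s : e a b -> path e x s -> last x s = x ->
  (size s)%:R < g%:R :> R -> edge_parity [set a; b] x s = false.
Proof. by move=> eab Hp Hl; rewrite ltr_nat; apply: edge_parity_short_closed_walk. Qed.

Lemma walk_parity_sym a b u v : e a b -> short u v ->
  walk_parity [set a; b] v u = walk_parity [set a; b] u v.
Proof.
move=> eab suv; pose s := walk_of u v ++ walk_of v u.
have ps : path e u s by rewrite cat_path walk_of_path walk_of_last walk_of_path.
have ls : last u s = u by rewrite last_cat !walk_of_last.
have size_s : (size s)%:R < g%:R :> R.
  have := walk_of_size u v; have := walk_of_size v u; have := ler0n R g.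
  by move: suv; rewrite /s size_cat natrD /short (D_sym v u) => *; lra.
move: (closed_walk_parity eab ps ls size_s); rewrite edge_parity_cat walk_of_last.
by move/negbT; rewrite negb_add eq_sym => /eqP.
Qed.

Lemma walk_parity_cocycle a b x y z : e a b -> short x y -> short y z -> short x z ->
  walk_parity [set a; b] x z = walk_parity [set a; b] x y (+) walk_parity [set a; b] y z.
Proof.
move=> eab sxy syz sxz; pose s := walk_of x y ++ walk_of y z ++ walk_of z x.
have ps : path e x s by rewrite !cat_path !walk_of_last !walk_of_path.
have ls : last x s = x by rewrite !last_cat !walk_of_last.
have size_s : (size s)%:R < g%:R :> R.
  have := walk_of_size x y; have := walk_of_size y z; have := walk_of_size z x.
  by move: sxy syz sxz; rewrite /s !size_cat !natrD /short (D_sym z x) => *; lra.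
move: (closed_walk_parity eab ps ls size_s).
rewrite !edge_parity_cat !walk_of_last -/(walk_parity _ z x) walk_parity_sym //.
rewrite -/(walk_parity _ x y) -/(walk_parity _ y z).
by case: (walk_parity _ x y) (walk_parity _ y z) (walk_parity _ x z) => [] [] [].
Qed.

Lemma walk_parity_edge a b u v : e a b -> e u v -> short u v ->
  walk_parity [set a; b] u v = ([set u; v] == [set a; b]).
Proof.
move=> eab euv suv; pose s := rcons (walk_of u v) u.
have ps : path e u s by rewrite rcons_path walk_of_path walk_of_last e_sym.
have ls : last u s = u by rewrite last_rcons.
have size_s : (size s)%:R < g%:R :> R.
  have := walk_of_size u v; have := ler0n R g.
  by move: suv; rewrite /s size_rcons -addn1 natrD /short => *; lra.
move: (closed_walk_parity eab ps ls size_s).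
rewrite /s -cats1 edge_parity_cat walk_of_last /= addbF [[set v; u]]setUC.
by move/negbT; rewrite negb_add => /eqP.
Qed.

Lemma short_of_not_long B : B \in edges e ->
  ~~ [exists x, exists y, [&& B == [set x; y], e x y & g%:R / 3 - 1 <= D x y]] ->
  exists u v, [/\ B = [set u; v], e u v & short u v].
Proof.
move=> BE long_B; have /imsetP[[u v] /[!inE] /= euv EB] := BE.
exists u, v; split=> //; rewrite /short ltNge; apply: contra long_B => le_uv.
by apply/existsP; exists u; apply/existsP; exists v; rewrite EB eqxx euv.
Qed.

Lemma card_short_edges_lt (disp : Order.disp_t) (O : orderType disp) (k : V -> O)
    (v0 : V) (H : {set {set V}}) :
  (forall x y z, (k y <= k x)%O -> (k z <= k x)%O -> short x y -> short x z -> short y z) ->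
  (forall B, B \in H -> exists u v, [/\ B = [set u; v], e u v & short u v]) ->
  (#|H| < #|V|)%N.
Proof.
move=> short_simplicial short_edge.
have coboundary A : exists hA : V -> bool,
    A \in H -> forall u v, short u v -> walk_parity A u v = hA u (+) hA v.
  have [AH|] := boolP (A \in H); last by exists xpred0.
  have [a [b [-> eab _]]] := short_edge A AH.
  have [h Hh] := cocycle_coboundary short_sym short_simplicial
    (fun x y => walk_parity_sym eab) (fun x y z => walk_parity_cocycle eab).
  by exists h.
have [h Hh] := fin_all_exists coboundary.
apply: (card_lt_of_cut_family (h := h) v0) => B BH.
have [u [v [-> euv suv]]] := short_edge B BH.
exists u, v => A AH; rewrite -Hh //.
by have [a [b [-> eab _]]] := short_edge A AH; rewrite walk_parity_edge // eq_sym.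
Qed.

End ShortEdges.

Theorem lemma5p3 (R : realFieldType) (V : finType) (e : rel V) (n g : nat)
  (U : finType) (eT : rel U) (w : U -> U -> R) (dT : U -> U -> R) (f : V -> U) :
  simple_graph e -> #|V| = n -> girth e g ->
  weighted_tree eT w ->
  (forall a b, is_tdist eT w a b (dT a b)) ->
  (* non-contractive: d_T(f x, f y) >= d_G(x, y) *)
  (forall x y, exists d, is_gdist e x y d /\ (d%:R <= dT (f x) (f y))) ->
  (#|[set A in edges e | [exists x, exists y,
        [&& A == [set x; y], e x y & g%:R / 3 - 1 <= dT (f x) (f y)]]]|%:R
     / #|edges e|%:R : R)
  >= (#|edges e|%:R - (n%:R - 1)) / #|edges e|%:R.
Proof.
move=> [e_sym e_irr] <- [[c0 [c0_cycle _]] girth_le] eT_tree dT_tdist noncontr.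
have v0 : V by case: c0 c0_cycle => [[]|v0 _ _] //; exact: v0.
pose D u v := dT (f u) (f v).
have [walk_of walk_ofP] := walks_within_bound (D := D) noncontr.
set L := [set A in edges e | _].
pose H := [set A in edges e | A \notin L].
have card_LH : (#|L| + #|H| = #|edges e|)%N.
  rewrite -(cardsID L (edges e)); congr (_ + _)%N; apply: eq_card => A; rewrite !inE.
    by case: (A \in edges e).
  by rewrite andbC.
have card_H : (#|H| < #|V|)%N.
  apply: (card_short_edges_lt e_sym e_irr girth_le _ walk_ofP (k := D v0) v0).
  - by move=> u v; apply: tdist_sym eT_tree dT_tdist _ _.
  - move=> x y z ky kz; rewrite /short => sxy sxz.
    apply: le_lt_trans (tdist_far_from_root eT_tree dT_tdist ky kz) _.
    by rewrite gt_max sxy sxz.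
  by move=> B; rewrite !inE => /andP[BE]; rewrite BE; apply: short_of_not_long.
rewrite ler_wpM2r ?invr_ge0 ?ler0n // -card_LH natrD.
have : (#|H| + 1)%:R <= #|V|%:R :> R by rewrite ler_nat addn1.
rewrite natrD; lra.
Qed.
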